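(* Let $I$ be a BPPS instance with $d$ scenarios in which every item has size $s_i\ge\varepsilon^2$, and let $\mathcal{P}^0=\{\{i\}: i\in\bigcup_{t\in\mathcal{T}}G_t^0\}$ be the packing placing each item of the groups $G_t^0$ in its own bin. Then $\mathrm{val}_{BPPS}(\mathcal{P}^0)\le\varepsilon\,\mathrm{OPT}(I)+2^d$.
   Context: A BPPS instance has $d$ scenarios, items $\mathcal{I}$, each item $i$ with size $s_i$ and type $\mathcal{K}_i\subseteq\{1,\dots,d\}$, and bins of capacity $1$; $S_k=\{i:k\in\mathcal{K}_i\}$. A packing is a partition $\mathcal{P}$ of (a set of) items with $\sum_{i\in B\cap S_k}s_i\le1$ for all $B\in\mathcal{P}$ and all $k$; its value is $\mathrm{val}_{BPPS}(\mathcal{P})=\max_k|\{B\in\mathcal{P}:B\cap S_k\ne\emptyset\}|$; $\mathrm{OPT}(I)$ is the minimum value of a packing of all items. $\mathcal{T}$ is the set of all types (all subsets of $\{1,\dots,d\}$). Here $\varepsilon\in(0,1/4]$ with $1/\varepsilon$ an integer, and $m=2^d/\varepsilon^3-1$. For each type $t$, $\mathcal{I}_t$ (items of type $t$) is sorted in nonincreasing order of size and partitioned into $m+1$ groups of consecutive items $G_t^0,\dots,G_t^m$, where each of the first $m$ groups has $\lceil|\mathcal{I}_t|/(m+1)\rceil$ items and the last has at most that many; so $G_t^0$ consists of the $\lceil|\mathcal{I}_t|/(m+1)\rceil$ largest items of type $t$. *)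

From mathcomp Require Import all_boot all_order all_algebra.
Set Implicit Arguments. Unset Strict Implicit. Unset Printing Implicit Defensive.
Import Order.TTheory GRing.Theory Num.Theory.

Section BPPS.
Variables (R : realFieldType) (d : nat) (T : finType).
Variables (s : T -> R) (K : T -> {set 'I_d}).

Definition Sk (k : 'I_d) : {set T} := [set i | k \in K i].

Definition items_of_type (t : {set 'I_d}) : {set T} := [set i | K i == t].

Definition packing (P : {set {set T}}) (A : {set T}) : Prop :=
  partition P A /\
  forall B, B \in P -> forall k : 'I_d, (\sum_(i in B :&: Sk k) s i <= 1)%R.

Definition val_bpps (P : {set {set T}}) : nat :=
  \max_(k : 'I_d) #|[set B in P | B :&: Sk k != set0]|.

End BPPS.

From mathcomp Require Import all_boot all_order all_algebra.
From mathcomp Require Import ring.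
Set Implicit Arguments. Unset Strict Implicit. Unset Printing Implicit Defensive.
Import Order.TTheory GRing.Theory Num.Theory.
Local Open Scope ring_scope.

(* Write eps = 1/k.  Fix a scenario j.  The bins of P^0 meeting S_j are the singletons of the
   items of the groups G_t^0 with j in t.  Each such group has
   ceil(|I_t| / M) <= |I_t| / M + 1 items, M = 2^d k^3, and there are at most
   2^d types, so at most |S_j| / M + 2^d bins of P^0 meet S_j.  On the other
   hand every item has size at least 1/k^2 and every bin of an optimal packing
   holds at most one unit of S_j, so |S_j| <= k^2 OPT, whence
   |S_j| / M <= OPT / k. *)

Lemma card_set (T : finType) : #|{set T}| = (2 ^ #|T|)%N.
Proof. by rewrite -cardsT -card_powerset powersetT cardsT. Qed.

Lemma leq_ceil_divM n M : ((n + M.-1) %/ M * M <= n + M)%N.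
Proof. by rewrite (leq_trans (leq_divM _ _)) // leq_add2l leq_pred. Qed.

Lemma card_singletons_meeting (T : finType) (U S : {set T}) :
  (#|[set B in [set [set i] | i in U] | B :&: S != set0]| = #|U :&: S|)%N.
Proof.
have -> : [set B in [set [set i] | i in U] | B :&: S != set0]
          = [set [set i] | i in U :&: S].
  apply/setP => B; rewrite inE; apply/andP/imsetP => [[/imsetP[i Ui ->]]|[i]].
    by rewrite setI_eq0 disjoints1 negbK => Si; exists i; rewrite ?inE ?Ui.
  rewrite inE => /andP[Ui Si] ->.
  by rewrite imset_f // setI_eq0 disjoints1 negbK.
exact/card_imset/set1_inj.
Qed.

Lemma natr_bigmax_le (R : numDomainType) (I : finType) (F : I -> nat) (x : R) :
  0 <= x -> (forall i, (F i)%:R <= x) -> (\max_i F i)%:R <= x.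
Proof.
move=> x_ge0 F_le; apply: (big_ind (fun n : nat => n%:R <= x)) => // m n.
by rewrite /maxn; case: ifP.
Qed.

Section GroupCounting.
Variables (d : nat) (T : finType) (K : T -> {set 'I_d}).

Lemma card_by_type (A : {set T}) :
  #|A| = (\sum_(t : {set 'I_d}) #|A :&: items_of_type K t|)%N.
Proof.
rewrite -sum1_card (partition_big K predT) //; apply: eq_bigr => t _.
by rewrite -sum1_card; apply: eq_bigl => i; rewrite !inE.
Qed.

Lemma Sk_items_of_type (j : 'I_d) (t : {set 'I_d}) :
  Sk K j :&: items_of_type K t = if j \in t then items_of_type K t else set0.
Proof.
apply/setP => i; case: ifP => j_t; rewrite !inE.
  by apply/andb_idl => /eqP ->.
by apply/andP => -[j_Ki /eqP Ki]; rewrite -Ki j_Ki in j_t.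
Qed.

Variables (G0 : {set 'I_d} -> {set T}) (M : nat).
Hypothesis G0_sub : forall t, G0 t \subset items_of_type K t.
Hypothesis card_G0 : forall t, (#|G0 t| * M <= #|items_of_type K t| + M)%N.

Lemma bigcup_groups_of_type (t : {set 'I_d}) :
  (\bigcup_t' G0 t') :&: items_of_type K t \subset G0 t.
Proof.
apply/subsetP => i; rewrite inE => /andP[/bigcupP[t' _ i_t'] i_t].
have := subsetP (G0_sub t') i i_t'; rewrite !inE in i_t * => /eqP Ki.
by rewrite -(eqP i_t) Ki.
Qed.

Lemma card_groups_Sk_of_type (j : 'I_d) (t : {set 'I_d}) :
  (#|(\bigcup_t' G0 t') :&: Sk K j :&: items_of_type K t| * M
    <= #|Sk K j :&: items_of_type K t| + M)%N.
Proof.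
rewrite -setIA Sk_items_of_type; case: ifP => _; last by rewrite setI0 cards0.
apply: leq_trans (card_G0 t); rewrite leq_mul2r.
by rewrite subset_leq_card ?orbT ?bigcup_groups_of_type.
Qed.

Lemma card_groups_Sk (j : 'I_d) :
  (#|(\bigcup_t G0 t) :&: Sk K j| * M <= #|Sk K j| + M * 2 ^ d)%N.
Proof.
rewrite card_by_type (card_by_type (Sk K j)) big_distrl /=.
have -> : (M * 2 ^ d = \sum_(t : {set 'I_d}) M)%N.
  by rewrite sum_nat_const card_set card_ord mulnC.
rewrite -big_split /=.
by apply: leq_sum => t _; exact: card_groups_Sk_of_type.
Qed.

End GroupCounting.

Lemma sum_Sk_le_val (R : realFieldType) d (T : finType) (s : T -> R)
    (K : T -> {set 'I_d}) (P : {set {set T}}) (A : {set T}) (j : 'I_d) :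
  packing s K P A -> \sum_(i in A :&: Sk K j) s i <= (val_bpps K P)%:R.
Proof.
case=> /and3P[/eqP <- trivP _] cap_P.
have bin_le B : B \in P -> \sum_(i in B) (if i \in Sk K j then s i else 0)
                           <= (if B :&: Sk K j != set0 then 1 else 0).
  move=> PB; rewrite -big_mkcondr; under eq_bigl => i do rewrite -in_setI.
  by case: eqP => [->|_]; rewrite ?big_set0 ?cap_P.
under eq_bigl => i do rewrite in_setI.
rewrite big_mkcondr /= big_trivIset //.
apply: le_trans (ler_sum _ bin_le) _.
rewrite -big_mkcondr sumr_const ler_nat.
apply: leq_trans (leq_bigmax j).
by apply/eq_leq/eq_card => B; rewrite inE.
Qed.

Theorem lemma5 (R : realFieldType) (d : nat) (T : finType)
  (s : T -> R) (K : T -> {set 'I_d}) (k : nat) (hk : (4 <= k)%N)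
  (hsize : forall i : T, (k%:R^-1) ^+ 2 <= s i)
  (G0 : {set 'I_d} -> {set T})
  (hG0sub : forall t, G0 t \subset items_of_type K t)
  (hG0card : forall t, (#|G0 t| =
      (#|items_of_type K t| + (2 ^ d * k ^ 3).-1) %/ (2 ^ d * k ^ 3))%N)
  (hG0large : forall t i j, i \in G0 t ->
      j \in items_of_type K t :\: G0 t -> s j <= s i)
  (Popt : {set {set T}})
  (hPopt : packing s K Popt [set: T])
  (hopt : forall P, packing s K P [set: T] -> (val_bpps K Popt <= val_bpps K P)%N) :
  (val_bpps K [set [set i] | i in \bigcup_(t : {set 'I_d}) G0 t])%:R
    <= (k%:R^-1 * (val_bpps K Popt)%:R + (2 ^ d)%:R :> R).
Proof.
set V := val_bpps K Popt; set M := (2 ^ d * k ^ 3)%N.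
have k_gt0 : (0 < k)%N by apply: leq_trans hk.
have M_gt0 : 0 < M%:R :> R by rewrite ltr0n /M muln_gt0 !expn_gt0 k_gt0.
rewrite /val_bpps; apply: natr_bigmax_le => [|j].
  by rewrite addr_ge0 ?mulr_ge0 ?invr_ge0.
rewrite card_singletons_meeting.
have card_G0 t : (#|G0 t| * M <= #|items_of_type K t| + M)%N.
  by rewrite hG0card leq_ceil_divM.
have card_le := card_groups_Sk hG0sub card_G0 j.
have Sk_le : #|Sk K j|%:R <= V%:R * k%:R ^+ 2 :> R.
  rewrite -ler_pdivrMr ?exprn_gt0 ?ltr0n // -exprVn.
  apply: le_trans (sum_Sk_le_val j hPopt); rewrite setTI mulr_natl -sumr_const.
  exact: ler_sum.
rewrite -(ler_pM2r M_gt0) mulrDl -natrM [X in _ <= _ + X]mulrC -natrM.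
apply: le_trans (_ : _ <= (#|Sk K j| + M * 2 ^ d)%:R) _.
  by rewrite ler_nat card_le.
rewrite natrD lerD2r; apply: le_trans Sk_le _.
have -> : k%:R^-1 * V%:R * M%:R = (2 ^ d)%:R * (V%:R * k%:R ^+ 2) :> R.
  by rewrite natrM !natrX; field; rewrite pnatr_eq0 -lt0n.
by rewrite ler_peMl ?mulr_ge0 // ler1n expn_gt0.
Qed.
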